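(* Let $\Pi$ be a non-negative projector on $\mathcal{Q}^n$ of rank $q$. Then there exist non-negative states $|\psi_1\rangle,\ldots,|\psi_q\rangle$ such that $\langle\psi_a|\psi_b\rangle=\delta_{a,b}$ for all $a,b$ and $\Pi=\sum_{a=1}^q|\psi_a\rangle\langle\psi_a|$.
   Context: $\mathcal{Q}^n=(\mathbb{C}^2)^{\otimes n}$ with standard basis $\{|x\rangle\}$, $x\in\{0,1\}^n$. A non-negative projector is a Hermitian projector on $\mathcal{Q}^n$ whose matrix in the standard basis has only real non-negative entries. A non-negative state is a normalized vector in $\mathcal{Q}^n$ all of whose amplitudes in the standard basis are real and non-negative. *)

From mathcomp Require Import all_boot all_order all_algebra.
Set Implicit Arguments. Unset Strict Implicit. Unset Printing Implicit Defensive.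
Import Order.TTheory GRing.Theory Num.Theory.
Local Open Scope ring_scope.

(* Operators / vectors on Q^n = (C^2)^{⊗ n}, represented in the standard basis
   as (2^n)x(2^n) matrices / 2^n column vectors over a numeric closed field C
   (e.g. the complex numbers). *)

Definition adj_mx (C : numClosedFieldType) m n (A : 'M[C]_(m, n)) : 'M[C]_(n, m) :=
  (map_mx Num.conj A)^T.

Definition hermitian (C : numClosedFieldType) n (A : 'M[C]_n) : Prop :=
  adj_mx A = A.

Definition projector (C : numClosedFieldType) n (A : 'M[C]_n) : Prop :=
  hermitian A /\ A *m A = A.

(* all entries real and non-negative (0 <= x in a numClosedField forces x real) *)
Definition nonneg_mx (C : numClosedFieldType) m n (A : 'M[C]_(m, n)) : Prop :=
  forall i j, 0 <= A i j.

Definition nonneg_projector (C : numClosedFieldType) (n : nat) (P : 'M[C]_(2 ^ n)) : Prop :=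
  projector P /\ nonneg_mx P.

Definition braket (C : numClosedFieldType) m (u v : 'cV[C]_m) : C :=
  (adj_mx u *m v) 0 0.

Definition nonneg_state (C : numClosedFieldType) (n : nat) (psi : 'cV[C]_(2 ^ n)) : Prop :=
  nonneg_mx psi /\ braket psi psi = 1.

(* Read the support relation i ~ j :<-> P i j > 0 of a non-negative symmetric
   idempotent P as a graph.  Since P i j = \sum_l P i l * P l j, the relation is
   transitive, so the indices with a positive diagonal entry split into blocks,
   each block being a principal submatrix with all entries positive, and P is
   block diagonal.  A Perron-Frobenius argument (if P x = x then P |x| = |x|)
   shows that each block has rank one, so it is the outer product of its
   normalised first column with itself.  These columns are non-negative and
   orthonormal, and there are exactly \rank P of them. *)

From mathcomp Require Import all_boot all_order all_algebra.

Set Implicit Arguments.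
Unset Strict Implicit.
Unset Printing Implicit Defensive.

Import Order.TTheory GRing.Theory Num.Theory.
Local Open Scope ring_scope.

Lemma mulmx_sum_col_row (R : pzSemiRingType) m r n (A : 'M[R]_(m, r)) (B : 'M_(r, n)) :
  A *m B = \sum_a col a A *m row a B.
Proof.
apply/matrixP => i j; rewrite !mxE summxE; apply: eq_bigr => a _.
by rewrite !mxE big_ord1 !mxE.
Qed.

Lemma mxrank_mulmx_linv (F : fieldType) m r (A : 'M[F]_(m, r)) (B : 'M_(r, m)) :
  B *m A = 1%:M -> \rank (A *m B) = r.
Proof.
move=> BA1; apply/eqP; rewrite eqn_leq mulmx_max_rank /=.
by apply: (@mulmx1_min_rank _ _ _ _ _ B A); rewrite !mulmxA BA1 mul1mx.
Qed.

Section NonnegSymmetricIdempotent.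

Variables (R : numFieldType) (N : nat) (P : 'M[R]_N).
Hypotheses (P_idem : P *m P = P) (P_sym : P^T = P) (P_ge0 : forall i j, 0 <= P i j).

Lemma entry_sym i j : P j i = P i j.
Proof. by rewrite -[in RHS]P_sym mxE. Qed.

Lemma entry_idem i j : P i j = \sum_l P i l * P l j.
Proof. by rewrite -[in LHS]P_idem mxE. Qed.

Lemma entry_gt0 i j : (0 < P i j) = (P i j != 0).
Proof. by rewrite lt0r P_ge0 andbT. Qed.

Lemma mul_entry_le i l j : P i l * P l j <= P i j.
Proof.
rewrite (entry_idem i j) (bigD1 l) //= lerDl.
by apply: sumr_ge0 => k _; apply: mulr_ge0.
Qed.

Lemma entry_gt0_trans i l j : 0 < P i l -> 0 < P l j -> 0 < P i j.
Proof. by move=> Pil Plj; apply: lt_le_trans (mul_entry_le i l j); apply: mulr_gt0. Qed.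

Lemma diag_eq0_entry i j : P i i = 0 -> P i j = 0.
Proof.
have terms_ge0 k : true -> 0 <= P i k * P k i by rewrite mulr_ge0.
rewrite entry_idem => /(psumr_eq0P terms_ge0)/(_ j isT).
by rewrite (entry_sym i j) => /eqP; rewrite -expr2 sqrf_eq0 => /eqP.
Qed.

Lemma norm_fixed_mx (x : 'cV[R]_N) :
  P *m x = x -> P *m map_mx Num.norm x = map_mx Num.norm x.
Proof.
move=> Px; set a := map_mx Num.norm x; set b := P *m a.
have a_ge0 i : 0 <= a i 0 by rewrite mxE normr_ge0.
have a_le_b i : a i 0 <= b i 0.
  rewrite [a i 0]mxE [b i 0]mxE -{1}Px mxE; apply: le_trans (ler_norm_sum _ _ _) _.
  by apply: ler_sum => l _; rewrite normrM ger0_norm // mxE.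
have bTb : b^T *m b = a^T *m b by rewrite trmx_mul P_sym -mulmxA (mulmxA P) P_idem.
have terms_ge0 l : true -> 0 <= (b l 0 - a l 0) * b l 0.
  by move=> _; rewrite mulr_ge0 ?subr_ge0 ?(le_trans (a_ge0 l)).
have terms_eq0 : \sum_i (b i 0 - a i 0) * b i 0 = 0.
  have /matrixP/(_ 0 0)/eqP := bTb; rewrite !mxE -subr_eq0 -sumrB => /eqP sum_eq0.
  by rewrite -[RHS]sum_eq0; apply: eq_bigr => i _; rewrite !mxE mulrBl.
apply/matrixP => i z; rewrite (ord1 z); apply/eqP; rewrite eq_le a_le_b andbT.
have /eqP := psumr_eq0P terms_ge0 terms_eq0 (i := i) isT.
by rewrite mulf_eq0 subr_eq0 => /orP[/eqP-> | /eqP->].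
Qed.

Lemma fixed_entry_vanish (x : 'cV[R]_N) k j :
  P *m x = x -> x k 0 = 0 -> 0 < P k j -> x j 0 = 0.
Proof.
move=> /norm_fixed_mx/matrixP/(_ k 0) + xk0 Pkj; rewrite !mxE xk0 normr0.
have terms_ge0 l : true -> 0 <= P k l * map_mx Num.norm x l 0 by rewrite mxE mulr_ge0.
move=> /(psumr_eq0P terms_ge0)/(_ j isT)/eqP.
by rewrite mxE mulf_eq0 normr_eq0 (gt_eqF Pkj) => /eqP.
Qed.

(* The vector P k k * P_i - P i k * P_k (P_t the t-th column) is fixed by P and
   vanishes at k, hence on the whole block of k. *)
Lemma mul_diag_entry k i j : 0 < P k i -> P i j * P k k = P i k * P j k.
Proof.
move=> Pki.
have [Pkj|] := eqVneq (P k j) 0; last first.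
  rewrite -entry_gt0 => Pkj; pose x := \col_t (P k k * P t i - P i k * P t k).
  have Px : P *m x = x.
    apply/matrixP => t z; rewrite (ord1 z) !mxE.
    under eq_bigr => l _ do rewrite mxE mulrBr mulrCA (mulrCA (P t l)).
    by rewrite sumrB -!mulr_sumr -!entry_idem.
  have xk0 : x k 0 = 0 by rewrite mxE (entry_sym k i) mulrC subrr.
  have /eqP := fixed_entry_vanish Px xk0 Pkj; rewrite mxE subr_eq0 => /eqP.
  by rewrite mulrC (entry_sym i j).
have Pij : P i j = 0.
  have [//|] := eqVneq (P i j) 0; rewrite -entry_gt0 => Pij.
  by have := entry_gt0_trans Pki Pij; rewrite entry_gt0 Pkj eqxx.
by rewrite Pij (entry_sym k j) Pkj !mul0r mulr0.
Qed.

(* The first index of each block. *)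
Definition leaders : {set 'I_N} :=
  [set k | (0 < P k k) && [forall j : 'I_N, (j < k)%N ==> (P j k == 0)]].

Lemma leader_diag_gt0 k : k \in leaders -> 0 < P k k.
Proof. by rewrite inE => /andP[]. Qed.

Lemma leaders_orth k l : k \in leaders -> l \in leaders -> k != l -> P k l = 0.
Proof.
rewrite !inE => /andP[_ /forallP lead_k] /andP[_ /forallP lead_l] kl.
case: (ltngtP k l) => [lt_kl | lt_lk | /val_inj eq_kl].
- by apply/eqP; move: (lead_l k); rewrite lt_kl.
- by rewrite entry_sym; apply/eqP; move: (lead_k l); rewrite lt_lk.
- by rewrite eq_kl eqxx in kl.
Qed.

Lemma exists_leader i : 0 < P i i -> exists2 k, k \in leaders & 0 < P k i.
Proof.
move=> Pii; have [k Pki min_k] := @arg_minnP _ i (fun k => 0 < P k i) val Pii.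
exists k => //.
have Pkk : 0 < P k k by apply: (entry_gt0_trans Pki); rewrite entry_sym.
rewrite inE Pkk; apply/forallP => j; apply/implyP => lt_jk.
apply: contraTT lt_jk; rewrite -entry_gt0 -leqNgt => Pjk.
exact/min_k/(entry_gt0_trans Pjk Pki).
Qed.

Lemma entry_leaders_sum i j : P i j = \sum_(k in leaders) P i k * P j k / P k k.
Proof.
have [Pii0 | ] := eqVneq (P i i) 0.
  rewrite (diag_eq0_entry j Pii0) big1 // => k _.
  by rewrite (diag_eq0_entry k Pii0) !mul0r.
rewrite -entry_gt0 => /exists_leader[k lead_k Pki].
have Pkk := leader_diag_gt0 lead_k.
rewrite (bigD1 k) //= big1 ?addr0 => [|l /andP[lead_l lk]]; last first.
  suff -> : P i l = 0 by rewrite !mul0r.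
  have [//|] := eqVneq (P i l) 0; rewrite -entry_gt0 => Pil.
  have := entry_gt0_trans Pki Pil.
  by rewrite entry_gt0 (leaders_orth lead_k lead_l) ?eqxx // eq_sym.
by rewrite -(mul_diag_entry j Pki) mulfK // gt_eqF.
Qed.

End NonnegSymmetricIdempotent.

Lemma adj_mx_nonneg (C : numClosedFieldType) m n (A : 'M[C]_(m, n)) :
  nonneg_mx A -> adj_mx A = A^T.
Proof. by move=> A_ge0; apply/matrixP => i j; rewrite !mxE conj_Creal ?ger0_real. Qed.

Lemma braket_col (C : numClosedFieldType) m r (A : 'M[C]_(m, r)) a b :
  nonneg_mx A -> braket (col a A) (col b A) = (A^T *m A) a b.
Proof.
move=> A_ge0; rewrite /braket adj_mx_nonneg => [|i j]; last by rewrite mxE.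
by rewrite !mxE; apply: eq_bigr => i _; rewrite !mxE.
Qed.

Section LeaderColumns.

Variables (C : numClosedFieldType) (N : nat) (P : 'M[C]_N).
Hypotheses (P_idem : P *m P = P) (P_sym : P^T = P) (P_ge0 : forall i j, 0 <= P i j).

Let lead a := enum_val (a : 'I_#|leaders P|).

Definition leader_cols : 'M[C]_(N, #|leaders P|) :=
  \matrix_(i, a) (P i (lead a) / sqrtC (P (lead a) (lead a))).

Lemma leader_cols_ge0 : nonneg_mx leader_cols.
Proof. by move=> i a; rewrite mxE divr_ge0 ?sqrtC_ge0. Qed.

Lemma leader_cols_orthonormal : leader_cols^T *m leader_cols = 1%:M.
Proof.
apply/matrixP => a b; rewrite !mxE.
under eq_bigr => i _ do rewrite !mxE mulrACA (entry_sym P_sym (lead a) i).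
rewrite -mulr_suml -entry_idem // -invfM.
have [<- | ab] := eqVneq a b.
  by rewrite -expr2 sqrtCK divff // gt_eqF // leader_diag_gt0 ?enum_valP.
rewrite leaders_orth ?mul0r ?enum_valP //.
by apply: contra ab => /eqP/enum_val_inj->.
Qed.

Lemma leader_cols_outer : leader_cols *m leader_cols^T = P.
Proof.
apply/matrixP => i j; rewrite (entry_leaders_sum P_idem P_sym P_ge0) big_enum_val !mxE.
apply: eq_bigr => a _; rewrite !mxE mulrACA -invfM -expr2 sqrtCK.
by rewrite (entry_sym P_sym _ j).
Qed.

End LeaderColumns.

Theorem lemma4p2 (C : numClosedFieldType) (n q : nat) (P : 'M[C]_(2 ^ n)) :
  nonneg_projector P -> \rank P = q ->
  exists psi : 'I_q -> 'cV[C]_(2 ^ n),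
    (forall a, nonneg_state (psi a)) /\
    (forall a b, braket (psi a) (psi b) = (a == b)%:R) /\
    P = \sum_(a < q) (psi a *m adj_mx (psi a)).
Proof.
move=> [[P_herm P_idem] P_ge0] <-.
have P_sym : P^T = P by rewrite -adj_mx_nonneg.
set Psi := leader_cols P.
have Psi_ge0 : nonneg_mx Psi := leader_cols_ge0 P_ge0.
have ortho a b : braket (col a Psi) (col b Psi) = (a == b)%:R.
  by rewrite braket_col // leader_cols_orthonormal // mxE.
rewrite -(leader_cols_outer P_idem P_sym P_ge0) -/Psi.
rewrite mxrank_mulmx_linv ?leader_cols_orthonormal //.
exists (fun a => col a Psi); split; [|split] => // [a | ].
  by split; [move=> i j; rewrite mxE | rewrite ortho eqxx].
rewrite mulmx_sum_col_row; apply: eq_bigr => a _.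
by rewrite adj_mx_nonneg ?tr_col // => i j; rewrite mxE.
Qed.
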